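(* Let $\alpha,\beta\in\mathbb{C}\smallsetminus\{0,1\}$. The morphism $\nu_{\alpha,\beta}\colon S_{\alpha,\beta}\to\mathbb{A}^2_{\mathbb{C}}$, $(x,y,u,v)\mapsto(x+u,\, ix-iu)$, induces an isomorphism $S_{\alpha,\beta}\xrightarrow{\sim} W_{\alpha,\beta}$, i.e. there is an isomorphism $S_{\alpha,\beta}\to W_{\alpha,\beta}$ whose composition with the blow-down map $W_{\alpha,\beta}\to\mathbb{A}^2_{\mathbb{C}}$ equals $\nu_{\alpha,\beta}$ (on the preimage of the affine plane).
   Context: $S_{\alpha,\beta}\subset\mathbb{A}^4_{\mathbb{C}}=\operatorname{Spec}\mathbb{C}[x,y,u,v]$ is the affine surface defined by $yu=x(x-1)(x-\alpha)$, $xv=u(u-1)(u-\beta)$, $yv=(x-1)(x-\alpha)(u-1)(u-\beta)$. $Y_{\alpha,\beta}$ is the blow-up of $\mathbb{P}^2_{\mathbb{C}}$ (coordinates $[x:y:z]$, affine chart $z=1$ with coordinates $(x,y)$) in the five points $(0,0)$, $(1,i)$, $(\alpha,\alpha i)$, $(1,-i)$, $(\beta,-\beta i)$ of $\mathbb{A}^2_{\mathbb{C}}$. Let $L_z$, $L_{x+iy}$, $L_{x-iy}$ denote the strict transforms in $Y_{\alpha,\beta}$ of the lines $z=0$, $x+iy=0$, $x-iy=0$. Then $W_{\alpha,\beta}=Y_{\alpha,\beta}\smallsetminus(L_z\cup L_{x+iy}\cup L_{x-iy})$; equivalently, $W_{\alpha,\beta}$ is the blow-up of $\mathbb{A}^2_{\mathbb{C}}$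 in these five points with the strict transforms of the lines $x+iy=0$ and $x-iy=0$ removed. *)

(* The base field C is R[i] for R : realType
   (every realType is a complete archimedean ordered field, i.e. R ~ the reals,
   so R[i] ~ the complex numbers). *)
From HB Require Import structures.
From mathcomp Require Import all_boot all_order all_algebra.
From mathcomp Require Import reals.
From mathcomp Require Import complex.
Set Implicit Arguments. Unset Strict Implicit. Unset Printing Implicit Defensive.
Import Order.TTheory GRing.Theory Num.Theory.
Local Open Scope ring_scope.

Section Geometry.
Variable R : realType.

Definition CC := R[i].
Definition iC : CC := Complex 0 1.

(* Ambient spaces  A^n x (P^1)^m.  A point is represented by an affine *)
(* part ('I_n -> CC) and homogeneous coordinates (s_j0, s_j1) for each *)
(* P^1 factor j; a representative is valid when no pair is (0,0), and *)
(* two representatives are the same point when they differ by scaling  *)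
(* each pair by a nonzero scalar.                                      *)
Definition pt (n m : nat) := (('I_n -> CC) * ('I_m -> CC * CC))%type.

Definition valid n m (p : pt n m) : Prop :=
  forall j : 'I_m, (p.2 j).1 <> 0 \/ (p.2 j).2 <> 0.

Definition scale n m (lam : 'I_m -> CC) (p : pt n m) : pt n m :=
  (p.1, fun j => (lam j * (p.2 j).1, lam j * (p.2 j).2)).

Definition same n m (p q : pt n m) : Prop :=
  exists lam : 'I_m -> CC, (forall j, lam j <> 0) /\ q = scale lam p.

Inductive polyfun n m : (pt n m -> CC) -> Prop :=
| pf_const (c : CC) : polyfun (fun _ => c)
| pf_aff (i : 'I_n) : polyfun (fun p => p.1 i)
| pf_proj0 (j : 'I_m) : polyfun (fun p => (p.2 j).1)
| pf_proj1 (j : 'I_m) : polyfun (fun p => (p.2 j).2)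
| pf_add f g : polyfun f -> polyfun g -> polyfun (fun p => f p + g p)
| pf_mul f g : polyfun f -> polyfun g -> polyfun (fun p => f p * g p).

Definition homog n m (d : 'I_m -> nat) (f : pt n m -> CC) : Prop :=
  forall lam : 'I_m -> CC, (forall j, lam j <> 0) ->
    forall p, f (scale lam p) = (\prod_(j < m) lam j ^+ d j) * f p.

Definition mhpoly n m (d : 'I_m -> nat) (f : pt n m -> CC) : Prop :=
  polyfun f /\ homog d f.

Definition zclosure n m (A : pt n m -> Prop) : pt n m -> Prop :=
  fun p => valid p /\
    forall (d : 'I_m -> nat) (g : pt n m -> CC), mhpoly d g ->
      (forall q, valid q -> A q -> g q = 0) -> g p = 0.

(* Morphisms between locally closed subsets X of A^n x (P^1)^m and Y  *)
(* of A^n' x (P^1)^m' (given as predicates on representatives).       *)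
Definition morphism n m n' m' (X : pt n m -> Prop) (Y : pt n' m' -> Prop)
    (F : pt n m -> pt n' m') : Prop :=
  (forall p, valid p -> X p -> valid (F p) /\ Y (F p)) /\
  (forall p q, valid p -> X p -> same p q -> same (F p) (F q)) /\
  (forall p, valid p -> X p ->
     exists (d : 'I_m -> nat) (h : pt n m -> CC) (g : 'I_n' -> pt n m -> CC)
            (e : 'I_m' -> 'I_m -> nat) (a b : 'I_m' -> pt n m -> CC),
       mhpoly d h /\ h p <> 0 /\
       (forall i, mhpoly d (g i)) /\
       (forall j, mhpoly (e j) (a j) /\ mhpoly (e j) (b j)) /\
       (forall j, a j p <> 0 \/ b j p <> 0) /\
       (forall q, valid q -> X q -> h q <> 0 ->
          (forall j, a j q <> 0 \/ b j q <> 0) ->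
          same (F q) (fun i => g i q / h q, fun j => (a j q, b j q)))).

Definition isomorphism n m n' m' (X : pt n m -> Prop) (Y : pt n' m' -> Prop)
    (F : pt n m -> pt n' m') : Prop :=
  morphism X Y F /\
  exists G : pt n' m' -> pt n m,
    [/\ morphism Y X G,
        forall p, valid p -> X p -> same (G (F p)) p &
        forall q, valid q -> Y q -> same (F (G q)) q].

(* The surface S_{alpha,beta} in A^4 (coordinates x,y,u,v = 0,1,2,3). *)
Definition S_ab (alpha beta : CC) : pt 4 0 -> Prop := fun p =>
  let x := p.1 0%R in let y := p.1 1%R in
  let u := p.1 2%R in let v := p.1 3%R in
  [/\ y * u = x * (x - 1) * (x - alpha),
      x * v = u * (u - 1) * (u - beta) &
      y * v = (x - 1) * (x - alpha) * (u - 1) * (u - beta)].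

Definition nu_ab (p : pt 4 0) : CC * CC :=
  (p.1 0%R + p.1 2%R, iC * p.1 0%R - iC * p.1 2%R).

Definition centre (alpha beta : CC) (k : 'I_5) : CC * CC :=
  match val k with
  | 0 => (0, 0)
  | 1 => (1, iC)
  | 2 => (alpha, alpha * iC)
  | 3 => (1, - iC)
  | _ => (beta, - (beta * iC))
  end.

(* The blow-up of A^2 (coordinates 0 = x, 1 = y) in the five centres,
   as the closed subset of A^2 x (P^1)^5 given by
   (x - p_k) s_k1 = (y - q_k) s_k0 for each centre (p_k, q_k);
   the blow-down map is the projection (x, y, s) |-> (x, y). *)
Definition Bl_ab (alpha beta : CC) : pt 2 5 -> Prop := fun w =>
  valid w /\
  forall k : 'I_5,
    (w.1 0%R - (centre alpha beta k).1) * (w.2 k).2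
    = (w.1 1%R - (centre alpha beta k).2) * (w.2 k).1.

Definition blowdown (w : pt 2 5) : CC * CC := (w.1 0%R, w.1 1%R).

Definition strict_transform (alpha beta : CC) (l : CC * CC -> CC) : pt 2 5 -> Prop :=
  zclosure (fun w => Bl_ab alpha beta w /\ l (blowdown w) = 0 /\
                     forall k, blowdown w <> centre alpha beta k).

Definition W_ab (alpha beta : CC) : pt 2 5 -> Prop := fun w =>
  Bl_ab alpha beta w /\
  ~ strict_transform alpha beta (fun z => z.1 + iC * z.2) w /\
  ~ strict_transform alpha beta (fun z => z.1 - iC * z.2) w.

End Geometry.

From HB Require Import structures.
From mathcomp Require Import all_boot all_order all_algebra.
From mathcomp Require Import reals complex boolp ring.
Set Implicit Arguments. Unset Strict Implicit. Unset Printing Implicit Defensive.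
Import Order.TTheory GRing.Theory Num.Theory.
Local Open Scope ring_scope.

(* In the coordinates x = (X - iY)/2, u = (X + iY)/2 of the plane, nu is
   (x, y, u, v) |-> (x, u), the lines X + iY = 0 and X - iY = 0 become u = 0 and
   x = 0, and the five centres become (0,0), (1,0), (alpha,0) on u = 0 and (0,1),
   (0,beta) on x = 0.  Over a centre (a, b) the blow-up equation reads
   (u - b) s_x = (x - a) s_u, where [s_x : s_u] is the fibre coordinate in the
   same basis.  The equations of S say y u = fx(x) and x v = fu(u) with
   fx = x(x-1)(x-alpha), fu = u(u-1)(u-beta), both with simple roots.  So F sends
   a point of S to [x - a : u - b] over each centre it avoids, and to
   [y : fx(x)/(x - a)] (resp. [fu(u)/(u - b) : v]) over the centre it lies on.
   Conversely y = fx(x)/u off u = 0, while on u = 0 it is recovered from the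
   fibre over the centre (x, 0) as fx(x)/(x - a) * s_x / s_u.  This is possible exactly
   off the strict transform of u = 0, whose points are the points of u = 0 that
   are not centres together with the limit directions s_u = 0 over the centres
   on u = 0; symmetrically for v.  Membership in a Zariski closure is shown with
   polynomial curves, non-membership with a vanishing multihomogeneous
   polynomial (X + iY or s_u). *)

Lemma poly_eq0_off_roots (F : numDomainType) (r e : {poly F}) : e != 0 ->
  (forall t, e.[t] != 0 -> r.[t] = 0) -> r = 0.
Proof.
move=> e_neq0 r_off.
suff /eqP : r * e = 0 by rewrite mulf_eq0 (negbTE e_neq0) orbF => /eqP.
pose rs := [seq n%:R : F | n <- iota 0 (size (r * e))].
apply: (@roots_geq_poly_eq0 _ _ rs); last by rewrite size_map size_iota.
  apply/allP => t _; rewrite /root hornerM.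
  by have [->|/r_off ->] := eqVneq e.[t] 0; rewrite ?mulr0 ?mul0r.
by rewrite map_inj_uniq ?iota_uniq // => a b /eqP; rewrite eqr_nat => /eqP.
Qed.

Lemma ord2_ext T (f g : 'I_2 -> T) : f 0 = g 0 -> f 1 = g 1 -> f = g.
Proof.
move=> e0 e1; apply: funext => -[[|[|?]] lt] //.
- by rewrite (_ : Ordinal lt = 0) //; apply: val_inj.
- by rewrite (_ : Ordinal lt = 1) //; apply: val_inj.
Qed.

Lemma ord4_ext T (f g : 'I_4 -> T) :
  f 0 = g 0 -> f 1 = g 1 -> f 2%R = g 2%R -> f 3%R = g 3%R -> f = g.
Proof.
move=> e0 e1 e2 e3; apply: funext => -[[|[|[|[|?]]]] lt] //.
- by rewrite (_ : Ordinal lt = 0) //; apply: val_inj.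
- by rewrite (_ : Ordinal lt = 1) //; apply: val_inj.
- by rewrite (_ : Ordinal lt = 2%R) //; apply: val_inj.
- by rewrite (_ : Ordinal lt = 3%R) //; apply: val_inj.
Qed.

Lemma shifted_cubic (F : idomainType) (c a b : F) :
  exists2 e : {poly F}, e != 0 & forall t, e.[t] = (c + t) * (c + t - a) * (c + t - b).
Proof.
exists (('X + c%:P) * ('X + (c - a)%:P) * ('X + (c - b)%:P)).
  by apply: monic_neq0; rewrite !monicMl ?monicXaddC.
by move=> t; rewrite !hornerM !hornerD !hornerX !hornerC; ring.
Qed.

Lemma mulf_div_scale (F : fieldType) (c l a b : F) : l != 0 ->
  c * (l * a) / (l * b) = c * a / b.
Proof.
move=> l_neq0; have [->|b_neq0] := eqVneq b 0; first by rewrite !mulr0 !invr0 !mulr0.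
by field; rewrite l_neq0 b_neq0.
Qed.

(** * Multihomogeneous polynomials and Zariski closures *)

Section Ambient.
Variable R : realType.
Local Notation C := (CC R).

Definition deg0 {m : nat} : 'I_m -> nat := fun _ => 0%N.

Section Polyfun.
Variables n m : nat.
Implicit Types (f g : pt R n m -> C) (d e : 'I_m -> nat) (lam : 'I_m -> C).

Lemma polyfunN f : polyfun f -> polyfun (fun p => - f p).
Proof.
move=> pf; rewrite (_ : (fun p => - f p) = (fun p => -1 * f p)).
  by apply: pf_mul pf; apply: pf_const.
by apply: funext => p; rewrite mulN1r.
Qed.

Definition deg1 (k : 'I_m) : 'I_m -> nat := fun j => (j == k : nat).
Definition degD d e : 'I_m -> nat := fun j => (d j + e j)%N.

Lemma prod_deg0 lam : \prod_j lam j ^+ deg0 j = 1.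
Proof. by rewrite big1. Qed.

Lemma prod_deg1 lam k : \prod_j lam j ^+ deg1 k j = lam k.
Proof.
rewrite (bigD1 k) //= big1 ?mulr1 /deg1 ?eqxx // => j /negbTE ->.
by rewrite expr0.
Qed.

Lemma prod_degD lam d e :
  \prod_j lam j ^+ degD d e j = (\prod_j lam j ^+ d j) * \prod_j lam j ^+ e j.
Proof. by rewrite -big_split; apply: eq_bigr => j _; rewrite exprD. Qed.

Lemma mhpolyM d e f g :
  mhpoly d f -> mhpoly e g -> mhpoly (degD d e) (fun p => f p * g p).
Proof.
move=> [pf hf] [pg hg]; split; first exact: pf_mul.
by move=> lam lam_neq0 p; rewrite hf // hg // prod_degD mulrACA.
Qed.

Lemma mhpoly0M d f g :
  mhpoly deg0 f -> mhpoly d g -> mhpoly d (fun p => f p * g p).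
Proof.
move=> [pf hf] [pg hg]; split; first exact: pf_mul.
by move=> lam lam_neq0 p; rewrite hf // hg // prod_deg0 mul1r mulrCA.
Qed.

Lemma mhpoly_deg0 f :
  polyfun f -> (forall lam p, f (scale lam p) = f p) -> mhpoly deg0 f.
Proof. by move=> pf f_scale; split=> // lam _ p; rewrite prod_deg0 mul1r. Qed.

End Polyfun.

Lemma mhpoly_dim0 n (d : 'I_0 -> nat) (f : pt R n 0 -> C) :
  polyfun f -> mhpoly d f.
Proof.
move=> pf; split=> // lam _ [p1 p2]; rewrite big_ord0 mul1r /scale /=.
by congr (f (_, _)); apply: funext => -[].
Qed.

Definition nz_pair (P : C * C) := P.1 <> 0 \/ P.2 <> 0.
Definition det2 (P Q : C * C) := P.1 * Q.2 - P.2 * Q.1.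

Lemma det2_self P : det2 P P = 0.
Proof. by rewrite /det2 mulrC subrr. Qed.

Lemma det2C P Q : det2 Q P = - det2 P Q.
Proof. by rewrite /det2; ring. Qed.

Lemma nz_pair_sub P Q : P != Q -> nz_pair (P.1 - Q.1, P.2 - Q.2).
Proof.
case: P Q => [a b] [c d]; rewrite xpair_eqE negb_and => /orP[] ne; [left|right];
  by apply/eqP; rewrite subr_eq0.
Qed.

Lemma det2_eq0_scale P Q : nz_pair P -> nz_pair Q -> det2 P Q = 0 ->
  exists lam, lam != 0 /\ Q = (lam * P.1, lam * P.2).
Proof.
case: P Q => [a b] [c d]; rewrite /nz_pair /det2 /= => nzP nzQ /eqP.
rewrite subr_eq0 => /eqP ad_bc.
have [a0|a_neq0] := eqVneq a 0.
  have b_neq0 : b != 0 by apply/eqP; case: nzP.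
  have c0 : c = 0 by apply/eqP; move: ad_bc; rewrite a0 mul0r => /esym/eqP;
    rewrite mulf_eq0 (negbTE b_neq0).
  have d_neq0 : d != 0 by apply/eqP => d0; case: nzQ.
  exists (d / b); rewrite mulf_neq0 ?invr_eq0 //.
  by split=> //; rewrite a0 c0 mulr0 divfK.
have c_neq0 : c != 0.
  apply/eqP => c0; move/eqP: ad_bc; rewrite c0 mulr0 mulf_eq0 (negbTE a_neq0).
  by move=> /eqP d0; case: nzQ.
exists (c / a); rewrite mulf_neq0 ?invr_eq0 //; split=> //.
by rewrite divfK //; congr pair; apply: (mulfI a_neq0); rewrite ad_bc; field.
Qed.

Lemma same_det2 n m (p q : pt R n m) : p.1 = q.1 -> valid p -> valid q ->
  (forall j, det2 (p.2 j) (q.2 j) = 0) -> same p q.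
Proof.
move=> eq1 vp vq det0.
have /choice [lam lamP] := fun j => det2_eq0_scale (vp j) (vq j) (det0 j).
exists lam; split=> [j|]; first by apply/eqP; case: (lamP j).
case: p q eq1 lamP {vp vq det0} => p1 p2 [q1 q2] /= -> lamP.
by congr pair; apply: funext => j; case: (lamP j).
Qed.

Lemma same_refl n m (p : pt R n m) : same p p.
Proof.
exists (fun _ => 1); split=> [j|]; first by apply/eqP; rewrite oner_eq0.
case: p => p1 p2; congr pair; apply: funext => j /=.
by rewrite !mul1r; case: (p2 j).
Qed.

Lemma zclosure_sub n m (A : pt R n m -> Prop) q : valid q -> A q -> zclosure A q.
Proof. by move=> vq Aq; split=> // d g _; apply. Qed.

Definition univ_poly (f : C -> C) := exists r : {poly C}, forall t, f t = r.[t].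

Lemma univ_poly_cst c : univ_poly (fun _ => c).
Proof. by exists c%:P => t; rewrite hornerC. Qed.

Lemma univ_poly_id : univ_poly (fun t => t).
Proof. by exists 'X => t; rewrite hornerX. Qed.

Lemma univ_polyD f g : univ_poly f -> univ_poly g -> univ_poly (fun t => f t + g t).
Proof. by move=> [r fr] [s gs]; exists (r + s) => t; rewrite hornerD fr gs. Qed.

Lemma univ_polyM f g : univ_poly f -> univ_poly g -> univ_poly (fun t => f t * g t).
Proof. by move=> [r fr] [s gs]; exists (r * s) => t; rewrite hornerM fr gs. Qed.

Lemma univ_polyN f : univ_poly f -> univ_poly (fun t => - f t).
Proof. by move=> [r fr]; exists (- r) => t; rewrite hornerN fr. Qed.

Definition poly_curve n m (w : C -> pt R n m) :=
  [/\ forall i, univ_poly (fun t => (w t).1 i),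
      forall j, univ_poly (fun t => ((w t).2 j).1) &
      forall j, univ_poly (fun t => ((w t).2 j).2)].

Lemma poly_curve_comp n m (w : C -> pt R n m) g :
  poly_curve w -> polyfun g -> univ_poly (fun t => g (w t)).
Proof.
case=> w1 w20 w21; elim=> {g} [c|i|j|j|f g _ pf _ pg|f g _ pf _ pg].
- exact: univ_poly_cst.
- exact: w1.
- exact: w20.
- exact: w21.
- exact: univ_polyD.
- exact: univ_polyM.
Qed.

Lemma zclosure_curve n m (A : pt R n m -> Prop) (w : C -> pt R n m)
    (e : {poly C}) q :
  poly_curve w -> e != 0 -> (forall t, e.[t] != 0 -> valid (w t) /\ A (w t)) ->
  valid q -> same (w 0) q -> zclosure A q.
Proof.
move=> cw e_neq0 wA vq [lam [lam_neq0 eq_q]]; rewrite eq_q in vq *.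
split=> // d g [pg hg] gA.
have [r gr] := poly_curve_comp cw pg.
suff r0 : r = 0 by rewrite hg // gr r0 horner0 mulr0.
by apply: (poly_eq0_off_roots e_neq0) => t /wA [vw Aw]; rewrite -gr gA.
Qed.

End Ambient.

Ltac polyfun_tac := repeat match goal with
  | |- polyfun (fun p => @?f p + @?g p) => apply: pf_add
  | |- polyfun (fun p => @?f p * @?g p) => apply: pf_mul
  | |- polyfun (fun p => - @?f p) => apply: polyfunN
  | |- polyfun (fun p => p.1 _) => apply: pf_aff
  | |- polyfun (fun p => (p.2 _).1) => apply: pf_proj0
  | |- polyfun (fun p => (p.2 _).2) => apply: pf_proj1
  | |- polyfun (fun _ => _) => apply: pf_const
  end.

(* The [GRing.add _] and [GRing.mul _] cases catch the eta-contracted forms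
   that unification produces for [fun t => c + t] and [fun t => c * t]. *)
Ltac univ_poly_tac := repeat match goal with
  | |- univ_poly (fun t => @?f t + @?g t) => apply: univ_polyD
  | |- univ_poly (fun t => @?f t * @?g t) => apply: univ_polyM
  | |- univ_poly (fun t => - @?f t) => apply: univ_polyN
  | |- univ_poly (GRing.add _) => apply: univ_polyD
  | |- univ_poly (GRing.mul _) => apply: univ_polyM
  | |- univ_poly (fun t => t) => apply: univ_poly_id
  | |- univ_poly (fun _ => _) => apply: univ_poly_cst
  end.

(** * Coordinates adapted to the lines X + iY = 0 and X - iY = 0 *)

Section Surface.
Variable R : realType.
Local Notation C := (CC R).
Local Notation i := (iC R).
Implicit Types (P Q : C * C).

Lemma iC_sqr : i * i = -1.
Proof.
apply/eqP; rewrite eq_complex /=.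
by rewrite !mul0r !mulr1 !mulr0 ?add0r ?addr0 ?sub0r ?subr0 ?oppr0 !eqxx.
Qed.

Lemma iC_neq0 : i != 0.
Proof.
apply/eqP => i0; have /eqP := iC_sqr.
by rewrite i0 mul0r eq_sym oppr_eq0 oner_eq0.
Qed.

Lemma two_neq0 : (2 : C) != 0. Proof. by rewrite pnatr_eq0. Qed.

(* [of_xu] is the linear map (x, u) |-> (X, Y) underlying nu; [xpart] and [upart]
   invert it up to a factor 2.  On fibres of the blow-up they give [s_x : s_u]. *)
Definition of_xu (P : C * C) : C * C := (P.1 + P.2, i * P.1 - i * P.2).
Definition xpart (P : C * C) := P.1 - i * P.2.
Definition upart (P : C * C) := P.1 + i * P.2.

Lemma xpart_of_xu P : xpart (of_xu P) = 2 * P.1.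
Proof. by have h := iC_sqr; rewrite /xpart /=; ring: h. Qed.

Lemma upart_of_xu P : upart (of_xu P) = 2 * P.2.
Proof. by have h := iC_sqr; rewrite /upart /=; ring: h. Qed.

Lemma det2_of_xu P Q : det2 (of_xu P) Q = i * (P.2 * xpart Q - P.1 * upart Q).
Proof. by have h := iC_sqr; rewrite /det2 /xpart /upart /=; ring: h. Qed.

Lemma det2_of_xu2 P Q : det2 (of_xu P) (of_xu Q) = - (2 * i) * det2 P Q.
Proof. by rewrite det2_of_xu xpart_of_xu upart_of_xu /det2; ring. Qed.

Lemma det2_of_xu_eq0 P Q : P.2 * xpart Q = P.1 * upart Q -> det2 (of_xu P) Q = 0.
Proof. by move=> e; rewrite det2_of_xu e subrr mulr0. Qed.

Lemma nz_pair_of_xu P : nz_pair P -> nz_pair (of_xu P).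
Proof.
move=> nzP; have [e1|] := eqVneq (of_xu P).1 0; last by left; apply/eqP.
have [e2|] := eqVneq (of_xu P).2 0; last by right; apply/eqP.
have := xpart_of_xu P; have := upart_of_xu P.
rewrite /xpart /upart e1 e2 mulr0 subr0 addr0 => /esym/eqP + /esym/eqP.
by rewrite !mulf_eq0 (negbTE two_neq0) /= => /eqP P2 /eqP P1; case: nzP.
Qed.

Lemma xpart_scale a P : xpart (a * P.1, a * P.2) = a * xpart P.
Proof. by rewrite /xpart /=; ring. Qed.

Lemma upart_scale a P : upart (a * P.1, a * P.2) = a * upart P.
Proof. by rewrite /upart /=; ring. Qed.

Definition xc (w : pt R 2 5) := xpart (w.1 0, w.1 1) / 2.
Definition uc (w : pt R 2 5) := upart (w.1 0, w.1 1) / 2.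

Definition mkpt (x u : C) (s : 'I_5 -> C * C) : pt R 2 5 :=
  (fun j => if val j == 0%N then (of_xu (x, u)).1 else (of_xu (x, u)).2, s).

Lemma xc_mkpt x u s : xc (mkpt x u s) = x.
Proof. by rewrite /xc /mkpt /= -/(of_xu (x, u)) xpart_of_xu mulrC mulKf ?two_neq0. Qed.

Lemma uc_mkpt x u s : uc (mkpt x u s) = u.
Proof. by rewrite /uc /mkpt /= -/(of_xu (x, u)) upart_of_xu mulrC mulKf ?two_neq0. Qed.

Lemma of_xu_c w : of_xu (xc w, uc w) = (w.1 0, w.1 1).
Proof. by have h := iC_sqr; rewrite /of_xu /xc /uc /xpart /upart /=; congr pair; field: h. Qed.

Lemma mkpt_c w s : (mkpt (xc w) (uc w) s).1 = w.1.
Proof. by case: (of_xu_c w) => e0 e1; apply: ord2_ext. Qed.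

Variables al be : C.
Hypotheses (al_neq0 : al != 0) (al_neq1 : al != 1) (be_neq0 : be != 0) (be_neq1 : be != 1).

Definition cx (k : 'I_5) : C := match val k with 1 => 1 | 2 => al | _ => 0 end.
Definition cu (k : 'I_5) : C := match val k with 3 => 1 | 4 => be | _ => 0 end.

Lemma centreE k : centre al be k = of_xu (cx k, cu k).
Proof.
by case: k => [[|[|[|[|[|?]]]]] ?] //; rewrite /centre /cx /cu /of_xu /=; congr pair; ring.
Qed.

Lemma cu_neq0_cx k : cu k != 0 -> cx k = 0.
Proof. by case: k => [[|[|[|[|[|?]]]]] ?] //; rewrite /cx /cu /= eqxx. Qed.

Lemma centre_inj j k : cx j = cx k -> cu j = cu k -> j = k.
Proof.
move=> ex eu; apply: val_inj; move: ex eu.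
case: j => [[|[|[|[|[|?]]]]] ?] //; case: k => [[|[|[|[|[|?]]]]] ?] //=;
  rewrite /cx /cu /= => /eqP ex /eqP eu //; move: ex eu;
  rewrite ?(eq_sym 0 1) ?(eq_sym 0 al) ?(eq_sym 1 al) ?(eq_sym 0 be) ?(eq_sym 1 be);
  by rewrite ?oner_eq0 ?(negbTE al_neq0) ?(negbTE al_neq1) ?(negbTE be_neq0)
    ?(negbTE be_neq1).
Qed.

Lemma blowdown_centreP w k :
  blowdown w = centre al be k <-> xc w = cx k /\ uc w = cu k.
Proof.
split=> [e|[ex eu]]; last by rewrite centreE -ex -eu of_xu_c.
rewrite /xc /uc (_ : (w.1 0, w.1 1) = blowdown w) // e centreE.
by rewrite xpart_of_xu upart_of_xu !(mulrC 2) !mulfK ?two_neq0.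
Qed.

Lemma Bl_abE w : Bl_ab al be w <->
  valid w /\ forall k, (uc w - cu k) * xpart (w.2 k) = (xc w - cx k) * upart (w.2 k).
Proof.
have key k : (xc w - cx k) * upart (w.2 k) - (uc w - cu k) * xpart (w.2 k) =
    i * ((w.1 0 - (centre al be k).1) * (w.2 k).2
         - (w.1 1 - (centre al be k).2) * (w.2 k).1).
  by have h := iC_sqr; rewrite centreE /xc /uc /xpart /upart /=; field: h.
split=> -[vw rel]; split=> // k.
  by apply/esym/eqP; rewrite -subr_eq0 key (rel k) subrr mulr0.
apply/eqP; rewrite -subr_eq0; apply/eqP; apply: (mulfI iC_neq0).
by rewrite -key rel subrr mulr0.
Qed.

Lemma Bl_det2 w k : Bl_ab al be w ->
  det2 (of_xu (xc w - cx k, uc w - cu k)) (w.2 k) = 0.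
Proof. by case/Bl_abE=> _ rel; apply: det2_of_xu_eq0; apply: rel. Qed.

Lemma upart_eq0_on_u0 w k : Bl_ab al be w -> uc w = 0 -> cu k = 0 ->
  xc w != cx k -> upart (w.2 k) = 0.
Proof.
case/Bl_abE=> _ /(_ k) + u0 cu0 xk; rewrite u0 cu0 subrr mul0r.
by move=> /esym/eqP; rewrite mulf_eq0 subr_eq0 (negbTE xk) => /eqP.
Qed.

Lemma xpart_eq0_on_x0 w k : Bl_ab al be w -> xc w = 0 -> cx k = 0 ->
  uc w != cu k -> xpart (w.2 k) = 0.
Proof.
case/Bl_abE=> _ /(_ k) + x0 cx0 uk; rewrite x0 cx0 subrr mul0r.
by move=> /eqP; rewrite mulf_eq0 subr_eq0 (negbTE uk) => /eqP.
Qed.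

Definition fx x := x * (x - 1) * (x - al).
Definition fu u := u * (u - 1) * (u - be).

Definition fx_quo (k : 'I_5) x :=
  match val k with 0 => (x - 1) * (x - al) | 1 => x * (x - al) | _ => x * (x - 1) end.
Definition fu_quo (k : 'I_5) u :=
  match val k with 0 => (u - 1) * (u - be) | 3 => u * (u - be) | _ => u * (u - 1) end.

Lemma fx_quoP k x : cu k = 0 -> (x - cx k) * fx_quo k x = fx x.
Proof.
case: k => [[|[|[|[|[|?]]]]] ?] //; rewrite /cu /cx /fx_quo /fx /= => cu0; try ring.
- by move/eqP: cu0; rewrite oner_eq0.
- by move/eqP: cu0; rewrite (negbTE be_neq0).
Qed.

Lemma fu_quoP k u : cx k = 0 -> (u - cu k) * fu_quo k u = fu u.
Proof.
case: k => [[|[|[|[|[|?]]]]] ?] //; rewrite /cu /cx /fu_quo /fu /= => cx0; try ring.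
- by move/eqP: cx0; rewrite oner_eq0.
- by move/eqP: cx0; rewrite (negbTE al_neq0).
Qed.

Lemma fx_quo_neq0 k : cu k = 0 -> fx_quo k (cx k) != 0.
Proof.
case: k => [[|[|[|[|[|?]]]]] ?] //; rewrite /cu /cx /fx_quo /= => cu0.
- by rewrite !sub0r mulf_neq0 ?oppr_eq0 ?oner_eq0.
- by rewrite mul1r subr_eq0 eq_sym.
- by rewrite mulf_neq0 ?subr_eq0.
- by move/eqP: cu0; rewrite oner_eq0.
- by move/eqP: cu0; rewrite (negbTE be_neq0).
Qed.

Lemma fu_quo_neq0 k : cx k = 0 -> fu_quo k (cu k) != 0.
Proof.
case: k => [[|[|[|[|[|?]]]]] ?] //; rewrite /cu /cx /fu_quo /= => cx0.
- by rewrite !sub0r mulf_neq0 ?oppr_eq0 ?oner_eq0.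
- by move/eqP: cx0; rewrite oner_eq0.
- by move/eqP: cx0; rewrite (negbTE al_neq0).
- by rewrite mul1r subr_eq0 eq_sym.
- by rewrite mulf_neq0 ?subr_eq0.
Qed.

Lemma fx_cx k : cu k = 0 -> fx (cx k) = 0.
Proof. by move=> cu0; rewrite -(fx_quoP _ cu0) subrr mul0r. Qed.

Lemma fu_cu k : cx k = 0 -> fu (cu k) = 0.
Proof. by move=> cx0; rewrite -(fu_quoP _ cx0) subrr mul0r. Qed.

(* The centre (x, 0) when [fx x = 0], and an arbitrary centre on u = 0 otherwise. *)
Definition xcentre (x : C) : 'I_5 :=
  if x == 0 then @Ordinal 5 0 isT else if x == 1 then @Ordinal 5 1 isT else @Ordinal 5 2 isT.
Definition ucentre (u : C) : 'I_5 :=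
  if u == 0 then @Ordinal 5 0 isT else if u == 1 then @Ordinal 5 3 isT else @Ordinal 5 4 isT.

Lemma xcentre_u0 x : cu (xcentre x) = 0.
Proof. by rewrite /xcentre; case: ifP => //; case: ifP. Qed.

Lemma ucentre_x0 u : cx (ucentre u) = 0.
Proof. by rewrite /ucentre; case: ifP => //; case: ifP. Qed.

Lemma xcentre_root x : fx x = 0 -> cx (xcentre x) = x.
Proof.
rewrite /fx /xcentre => /eqP; rewrite !mulf_eq0 !subr_eq0 => /orP[/orP[]|] /eqP ->.
- by rewrite eqxx.
- by rewrite oner_eq0 eqxx.
- by rewrite (negbTE al_neq0) (negbTE al_neq1).
Qed.

Lemma ucentre_root u : fu u = 0 -> cu (ucentre u) = u.
Proof.
rewrite /fu /ucentre => /eqP; rewrite !mulf_eq0 !subr_eq0 => /orP[/orP[]|] /eqP ->.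
- by rewrite eqxx.
- by rewrite oner_eq0 eqxx.
- by rewrite (negbTE be_neq0) (negbTE be_neq1).
Qed.

Lemma xcentre_cx k : cu k = 0 -> xcentre (cx k) = k.
Proof. by move=> cu0; apply: centre_inj; rewrite ?xcentre_u0 // xcentre_root ?fx_cx. Qed.

Lemma ucentre_cu k : cx k = 0 -> ucentre (cu k) = k.
Proof. by move=> cx0; apply: centre_inj; rewrite ?ucentre_x0 // ucentre_root ?fu_cu. Qed.

(** * The morphism F from S to W *)

Lemma S_abE p : S_ab al be p ->
  [/\ p.1 1 * p.1 2 = fx (p.1 0), p.1 0 * p.1 3 = fu (p.1 2) &
      p.1 1 * p.1 3 = (p.1 0 - 1) * (p.1 0 - al) * (p.1 2 - 1) * (p.1 2 - be)].
Proof. by []. Qed.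

(* At the origin both formulas apply; they agree by [centre_fibre_det2_x0]. *)
Definition centre_fibre (k : 'I_5) (p : pt R 4 0) : C * C :=
  if cu k == 0 then (p.1 1, fx_quo k (p.1 0)) else (fu_quo k (p.1 2), p.1 3).

Definition fibre (k : 'I_5) (b : bool) (p : pt R 4 0) : C * C :=
  if b then (p.1 0 - cx k, p.1 2 - cu k) else centre_fibre k p.

Definition off_centre (k : 'I_5) (p : pt R 4 0) := (p.1 0 != cx k) || (p.1 2 != cu k).

Definition F (p : pt R 4 0) : pt R 2 5 :=
  mkpt (p.1 0) (p.1 2) (fun k => of_xu (fibre k (off_centre k p) p)).

Lemma F_at_centre k p : p.1 0 = cx k -> p.1 2 = cu k -> (F p).2 k = of_xu (centre_fibre k p).
Proof. by move=> x_c u_c; rewrite /= /fibre /off_centre x_c u_c !eqxx. Qed.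

Lemma centre_fibre2_neq0 k p : p.1 0 = cx k -> cu k = 0 -> (centre_fibre k p).2 != 0.
Proof. by move=> x_c cu0; rewrite /centre_fibre cu0 eqxx x_c fx_quo_neq0. Qed.

Lemma centre_fibre1_neq0 k p : S_ab al be p ->
  p.1 0 = cx k -> p.1 2 = cu k -> cx k = 0 -> (centre_fibre k p).1 != 0.
Proof.
move=> /S_abE[_ _ yv] x_c u_c cx0; rewrite /centre_fibre.
have [cu0|cu_neq0] := eqVneq (cu k) 0; last by rewrite u_c fu_quo_neq0.
apply/eqP => /= y0; move/eqP: yv; rewrite y0 mul0r x_c u_c cx0 cu0 !sub0r eq_sym.
by apply/negP; rewrite !mulf_neq0 ?oppr_eq0 ?oner_eq0.
Qed.

Lemma fibre_nz k p : nz_pair (fibre k (off_centre k p) p).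
Proof.
rewrite /fibre /off_centre; case: ifP => [/orP[] nc|/norP[/negbNE/eqP x_c /negbNE/eqP u_c]].
- by left; apply/eqP; rewrite subr_eq0.
- by right; apply/eqP; rewrite subr_eq0.
have [cu0|cu_neq0] := eqVneq (cu k) 0.
  by right; apply/eqP; apply: centre_fibre2_neq0.
left; apply/eqP; rewrite /centre_fibre (negbTE cu_neq0) u_c fu_quo_neq0 //.
exact: cu_neq0_cx.
Qed.

Lemma centre_fibre_det2 k p : S_ab al be p ->
  det2 (p.1 0 - cx k, p.1 2 - cu k) (centre_fibre k p) = 0.
Proof.
move=> /S_abE[yu xv _]; rewrite /centre_fibre /det2 /=.
have [cu0|cu_neq0] := eqVneq (cu k) 0.
  by rewrite cu0 subr0 fx_quoP // -yu /=; ring.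
by rewrite cu_neq0_cx // subr0 fu_quoP ?cu_neq0_cx // -xv /=; ring.
Qed.

Lemma fibre_det2 k b b' p : S_ab al be p -> det2 (fibre k b p) (fibre k b' p) = 0.
Proof.
move=> /(centre_fibre_det2 k) ad.
by case: b b' => -[]; rewrite /fibre ?det2_self // det2C ad oppr0.
Qed.

Lemma F_valid p : valid (F p).
Proof. by move=> k; apply: nz_pair_of_xu; apply: fibre_nz. Qed.

Lemma F_Bl p : S_ab al be p -> Bl_ab al be (F p).
Proof.
move=> hS; apply/Bl_abE; split=> [|k]; first exact: F_valid.
rewrite xc_mkpt uc_mkpt /= xpart_of_xu upart_of_xu.
move: (fibre_det2 k true (off_centre k p) hS); rewrite /det2 /= => /eqP.
by rewrite subr_eq0 => /eqP e; rewrite mulrCA -e mulrCA.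
Qed.

Lemma F_blowdown p : blowdown (F p) = nu_ab p.
Proof. by []. Qed.

(** * The strict transforms of the two lines *)

Definition ST_u0 := strict_transform al be (fun z => z.1 + i * z.2).
Definition ST_x0 := strict_transform al be (fun z => z.1 - i * z.2).

Lemma uc_lineE w : w.1 0 + i * w.1 1 = 2 * uc w.
Proof. by rewrite /uc /upart /=; field. Qed.

Lemma xc_lineE w : w.1 0 - i * w.1 1 = 2 * xc w.
Proof. by rewrite /xc /xpart /=; field. Qed.

Lemma mhpoly_xpart k : mhpoly (deg1 k) (fun w : pt R 2 5 => xpart (w.2 k)).
Proof.
split=> [|lam _ w]; first by rewrite /xpart; polyfun_tac.
by rewrite prod_deg1 -xpart_scale.
Qed.

Lemma mhpoly_upart k : mhpoly (deg1 k) (fun w : pt R 2 5 => upart (w.2 k)).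
Proof.
split=> [|lam _ w]; first by rewrite /upart; polyfun_tac.
by rewrite prod_deg1 -upart_scale.
Qed.

Lemma F_not_ST_u0 p : S_ab al be p -> ~ ST_u0 (F p).
Proof.
move=> hS [_ vanish]; have [yu _ _] := S_abE hS.
have [u0|u_neq0] := eqVneq (p.1 2) 0.
  set k := xcentre (p.1 0); have cu0 : cu k = 0 := xcentre_u0 _.
  have x_c : p.1 0 = cx k by rewrite xcentre_root // -yu u0 mulr0.
  suff : upart ((F p).2 k) = 0.
    rewrite F_at_centre ?u0 // upart_of_xu; apply/eqP.
    by rewrite mulf_neq0 ?two_neq0 ?centre_fibre2_neq0.
  apply: (vanish _ _ (mhpoly_upart k)) => w _ [bw [/eqP lw nc]].
  move: lw; rewrite /blowdown /= uc_lineE mulf_eq0 (negbTE two_neq0) => /eqP uw.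
  apply: upart_eq0_on_u0 => //; apply/eqP => xw.
  by apply: (nc k); apply/blowdown_centreP; rewrite uw.
suff : (F p).1 0 + i * (F p).1 1 = 0.
  by rewrite uc_lineE uc_mkpt => /eqP; rewrite mulf_eq0 (negbTE two_neq0) (negbTE u_neq0).
apply: (vanish deg0 (fun w => w.1 0 + i * w.1 1)) => [|w _ [_ []] //].
by apply: mhpoly_deg0 => //; polyfun_tac.
Qed.

Lemma F_not_ST_x0 p : S_ab al be p -> ~ ST_x0 (F p).
Proof.
move=> hS [_ vanish]; have [_ xv _] := S_abE hS.
have [x0|x_neq0] := eqVneq (p.1 0) 0.
  set k := ucentre (p.1 2); have cx0 : cx k = 0 := ucentre_x0 _.
  have u_c : p.1 2 = cu k by rewrite ucentre_root // -xv x0 mul0r.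
  suff : xpart ((F p).2 k) = 0.
    rewrite F_at_centre ?x0 // xpart_of_xu; apply/eqP.
    by rewrite mulf_neq0 ?two_neq0 ?centre_fibre1_neq0 ?x0.
  apply: (vanish _ _ (mhpoly_xpart k)) => w _ [bw [/eqP lw nc]].
  move: lw; rewrite /blowdown /= xc_lineE mulf_eq0 (negbTE two_neq0) => /eqP xw.
  apply: xpart_eq0_on_x0 => //; apply/eqP => uw.
  by apply: (nc k); apply/blowdown_centreP; rewrite xw.
suff : (F p).1 0 - i * (F p).1 1 = 0.
  by rewrite xc_lineE xc_mkpt => /eqP; rewrite mulf_eq0 (negbTE two_neq0) (negbTE x_neq0).
apply: (vanish deg0 (fun w => w.1 0 - i * w.1 1)) => [|w _ [_ []] //].
by apply: mhpoly_deg0 => //; polyfun_tac.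
Qed.

Lemma F_W p : S_ab al be p -> W_ab al be (F p).
Proof. by move=> hS; split; [apply: F_Bl | split; [apply: F_not_ST_u0 | apply: F_not_ST_x0]]. Qed.

Definition line_pt k (dir : C * C) (t : C) : C * C := (cx k + dir.1 * t, cu k + dir.2 * t).

(* The lift of the line through the centre k with direction dir; at t = 0 it is
   the point of the exceptional curve over k in the direction dir. *)
Definition line_curve k dir t : pt R 2 5 :=
  mkpt (line_pt k dir t).1 (line_pt k dir t).2 (fun j =>
    if j == k then of_xu dir
    else of_xu ((line_pt k dir t).1 - cx j, (line_pt k dir t).2 - cu j)).

Lemma line_curve_poly k dir : poly_curve (line_curve k dir).
Proof.
split=> j; rewrite /line_curve /mkpt /line_pt /=;
  [case: (val j == 0%N) | case: (j == k) | case: (j == k)];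
  rewrite /of_xu /=; univ_poly_tac.
Qed.

Lemma line_curve_valid k dir t : nz_pair dir ->
  (forall j, j != k -> line_pt k dir t != (cx j, cu j)) -> valid (line_curve k dir t).
Proof.
move=> nz_dir nc j; rewrite /line_curve /=.
by case: eqP => [_|/eqP jk]; apply: nz_pair_of_xu => //; apply: nz_pair_sub (nc j jk).
Qed.

Lemma line_curve_Bl k dir t : nz_pair dir -> (forall j, line_pt k dir t != (cx j, cu j)) ->
  Bl_ab al be (line_curve k dir t) /\
  forall j, blowdown (line_curve k dir t) <> centre al be j.
Proof.
move=> nz_dir nc; split.
  apply/Bl_abE; split; first by apply: line_curve_valid => // j _.
  move=> j; rewrite xc_mkpt uc_mkpt /=.
  by case: eqP => [->|_]; rewrite xpart_of_xu upart_of_xu /=; ring.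
move=> j /blowdown_centreP; rewrite xc_mkpt uc_mkpt => -[xj uj].
by move: (nc j); rewrite -xj -uj -surjective_pairing eqxx.
Qed.

Lemma centre_neq j k : j != k -> (cx k, cu k) != (cx j, cu j).
Proof.
by move=> jk; apply/eqP => -[/esym ex /esym eu]; rewrite (centre_inj ex eu) eqxx in jk.
Qed.

Lemma line_curve_same0 k dir q : nz_pair dir -> Bl_ab al be q ->
  xc q = cx k -> uc q = cu k -> det2 (of_xu dir) (q.2 k) = 0 ->
  same (line_curve k dir 0) q.
Proof.
move=> nz_dir bq x_c u_c det_k; apply: same_det2.
- by rewrite /line_curve /line_pt !mulr0 !addr0 -x_c -u_c mkpt_c.
- by apply: line_curve_valid => // j jk; rewrite /line_pt !mulr0 !addr0 centre_neq.
- by case/Bl_abE: bq.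
move=> j; rewrite /line_curve /=; case: eqP => [->|_] //.
by rewrite /line_pt !mulr0 !addr0 -x_c -u_c Bl_det2.
Qed.

Lemma strict_transform_line l k dir (e : {poly C}) q : nz_pair dir -> e != 0 ->
  (forall t, e.[t] != 0 ->
     (forall j, line_pt k dir t != (cx j, cu j)) /\ l (of_xu (line_pt k dir t)) = 0) ->
  Bl_ab al be q -> xc q = cx k -> uc q = cu k -> det2 (of_xu dir) (q.2 k) = 0 ->
  strict_transform al be l q.
Proof.
move=> nz_dir e_neq0 e_line bq x_c u_c det_k.
apply: (zclosure_curve (line_curve_poly k dir) e_neq0).
- move=> t /e_line [nc lt]; have [bw ncw] := line_curve_Bl nz_dir nc.
  by split; [case: bw | split].
- by case/Bl_abE: bq.
- exact: line_curve_same0.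
Qed.

Lemma W_u0_fx q : W_ab al be q -> uc q = 0 -> fx (xc q) = 0.
Proof.
case=> bq [nst _] u0; apply/eqP/negPn/negP => fx_neq0; apply: nst.
apply: zclosure_sub; first by case/Bl_abE: bq.
split=> //; split=> [|j /blowdown_centreP [xj uj]].
  by rewrite /blowdown /= uc_lineE u0 mulr0.
by move: fx_neq0; rewrite xj fx_cx ?eqxx // -uj.
Qed.

Lemma W_x0_fu q : W_ab al be q -> xc q = 0 -> fu (uc q) = 0.
Proof.
case=> bq [_ nst] x0; apply/eqP/negPn/negP => fu_neq0; apply: nst.
apply: zclosure_sub; first by case/Bl_abE: bq.
split=> //; split=> [|j /blowdown_centreP [xj uj]].
  by rewrite /blowdown /= xc_lineE x0 mulr0.
by move: fu_neq0; rewrite uj fu_cu ?eqxx // -xj.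
Qed.

Lemma W_u0_upart q : W_ab al be q -> uc q = 0 -> upart (q.2 (xcentre (xc q))) != 0.
Proof.
move=> Wq u0; have x_c := xcentre_root (W_u0_fx Wq u0); case: Wq => bq [nst _].
apply/eqP => up0; apply: nst.
set k := xcentre (xc q); have cu0 : cu k = 0 := xcentre_u0 _.
have [e e_neq0 eE] := shifted_cubic (cx k) 1 al.
apply: (@strict_transform_line _ k (1, 0) e q _ e_neq0 _ bq).
- by left; apply/eqP; rewrite oner_eq0.
- move=> t; rewrite eE -/(fx (cx k + t)) => fx_neq0; split.
    move=> j; rewrite /line_pt /= mul1r mul0r addr0 cu0 xpair_eqE negb_and.
    have [cuj0|] := eqVneq (cu j) 0; last by rewrite orbT.
    by apply/orP; left; apply: contraNneq fx_neq0 => ->; rewrite fx_cx.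
  by rewrite -/(upart _) upart_of_xu /line_pt /= mul0r addr0 cu0 mulr0.
- exact/esym/x_c.
- by rewrite u0 cu0.
- by apply: det2_of_xu_eq0; rewrite up0 /= mul0r mulr0.
Qed.

Lemma W_x0_xpart q : W_ab al be q -> xc q = 0 -> xpart (q.2 (ucentre (uc q))) != 0.
Proof.
move=> Wq x0; have u_c := ucentre_root (W_x0_fu Wq x0); case: Wq => bq [_ nst].
apply/eqP => xp0; apply: nst.
set k := ucentre (uc q); have cx0 : cx k = 0 := ucentre_x0 _.
have [e e_neq0 eE] := shifted_cubic (cu k) 1 be.
apply: (@strict_transform_line _ k (0, 1) e q _ e_neq0 _ bq).
- by right; apply/eqP; rewrite oner_eq0.
- move=> t; rewrite eE -/(fu (cu k + t)) => fu_neq0; split.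
    move=> j; rewrite /line_pt /= mul1r mul0r addr0 cx0 xpair_eqE negb_and.
    have [cxj0|] := eqVneq (cx j) 0; last by [].
    by apply/orP; right; apply: contraNneq fu_neq0 => ->; rewrite fu_cu.
  by rewrite -/(xpart _) xpart_of_xu /line_pt /= mul0r addr0 cx0 mulr0.
- by rewrite x0 cx0.
- exact/esym/u_c.
- by apply: det2_of_xu_eq0; rewrite xp0 /= mul0r mulr0.
Qed.

(** * The inverse morphism G from W to S *)

(* The divisions by [upart] and [xpart] are junk only on the removed strict
   transforms ([W_u0_upart], [W_x0_xpart]). *)
Definition yG (w : pt R 2 5) : C :=
  let k := xcentre (xc w) in
  if uc w != 0 then fx (xc w) / uc w
  else fx_quo k (xc w) * xpart (w.2 k) / upart (w.2 k).

Definition vG (w : pt R 2 5) : C :=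
  let k := ucentre (uc w) in
  if xc w != 0 then fu (uc w) / xc w
  else fu_quo k (uc w) * upart (w.2 k) / xpart (w.2 k).

Definition G (w : pt R 2 5) : pt R 4 0 :=
  (fun j : 'I_4 => match val j with 0 => xc w | 1 => yG w | 2 => uc w | _ => vG w end,
   fun _ => (0, 0)).

Lemma yG_fibre k w : cu k = 0 -> Bl_ab al be w -> upart (w.2 k) != 0 ->
  yG w = fx_quo k (xc w) * xpart (w.2 k) / upart (w.2 k).
Proof.
move=> cu0 /Bl_abE[_ /(_ k)]; rewrite cu0 subr0 /yG => rel up_neq0.
have [u0|u_neq0] := eqVneq (uc w) 0; rewrite /=.
  move: rel; rewrite u0 mul0r => /esym/eqP; rewrite mulf_eq0 (negbTE up_neq0) orbF.
  by rewrite subr_eq0 => /eqP ->; rewrite xcentre_cx.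
apply/eqP; rewrite -(fx_quoP _ cu0) eqr_div //; apply/eqP.
by rewrite mulrAC -rel; ring.
Qed.

Lemma vG_fibre k w : cx k = 0 -> Bl_ab al be w -> xpart (w.2 k) != 0 ->
  vG w = fu_quo k (uc w) * upart (w.2 k) / xpart (w.2 k).
Proof.
move=> cx0 /Bl_abE[_ /(_ k)]; rewrite cx0 subr0 /vG => rel xp_neq0.
have [x0|x_neq0] := eqVneq (xc w) 0; rewrite /=.
  move: rel; rewrite x0 mul0r => /eqP; rewrite mulf_eq0 (negbTE xp_neq0) orbF.
  by rewrite subr_eq0 => /eqP ->; rewrite ucentre_cu.
apply/eqP; rewrite -(fu_quoP _ cx0) eqr_div //; apply/eqP.
by rewrite mulrAC rel; ring.
Qed.

Lemma yG_mul_uc q : W_ab al be q -> yG q * uc q = fx (xc q).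
Proof.
move=> Wq; have [u0|u_neq0] := eqVneq (uc q) 0; first by rewrite u0 mulr0 W_u0_fx.
by rewrite /yG u_neq0 divfK.
Qed.

Lemma xc_mul_vG q : W_ab al be q -> xc q * vG q = fu (uc q).
Proof.
move=> Wq; have [x0|x_neq0] := eqVneq (xc q) 0; first by rewrite x0 mul0r W_x0_fu.
by rewrite /vG x_neq0 mulrC divfK.
Qed.

Lemma yG_mul_vG q : W_ab al be q ->
  yG q * vG q = (xc q - 1) * (xc q - al) * (uc q - 1) * (uc q - be).
Proof.
move=> Wq; have [u0|u_neq0] := eqVneq (uc q) 0; have [x0|x_neq0] := eqVneq (xc q) 0.
- have up_neq0 := W_u0_upart Wq u0; have xp_neq0 := W_x0_xpart Wq x0.
  rewrite /yG /vG u0 x0 eqxx /= in up_neq0 xp_neq0 *.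
  rewrite /xcentre /ucentre eqxx /fx_quo /fu_quo /= in up_neq0 xp_neq0 *.
  by field; rewrite up_neq0 xp_neq0.
- have -> : vG q = 0 by rewrite /vG x_neq0 u0 /fu !mul0r.
  suff -> : (xc q - 1) * (xc q - al) = 0 by rewrite !mul0r mulr0.
  by apply: (mulfI x_neq0); rewrite mulrA mulr0 -(W_u0_fx Wq u0).
- have -> : yG q = 0 by rewrite /yG u_neq0 x0 /fx !mul0r.
  suff e : (uc q - 1) * (uc q - be) = 0 by rewrite mul0r -mulrA e mulr0.
  by apply: (mulfI u_neq0); rewrite mulrA mulr0 -(W_x0_fu Wq x0).
- by rewrite /yG /vG u_neq0 x_neq0 /= /fx /fu; field; rewrite u_neq0 x_neq0.
Qed.

Lemma G_S q : W_ab al be q -> S_ab al be (G q).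
Proof.
move=> Wq; split; [exact: yG_mul_uc | exact: xc_mul_vG | exact: yG_mul_vG].
Qed.

Definition regular_at (f : pt R 2 5 -> C) (q : pt R 2 5) :=
  exists d h g, [/\ mhpoly d h, mhpoly d g, h q != 0 &
    forall q', Bl_ab al be q' -> h q' != 0 -> f q' = g q' / h q'].

Lemma mhpoly_xc : mhpoly deg0 (fun w : pt R 2 5 => xc w).
Proof. by apply: mhpoly_deg0 => //; rewrite /xc /xpart /=; polyfun_tac. Qed.

Lemma mhpoly_uc : mhpoly deg0 (fun w : pt R 2 5 => uc w).
Proof. by apply: mhpoly_deg0 => //; rewrite /uc /upart /=; polyfun_tac. Qed.

Lemma yG_regular q : W_ab al be q -> regular_at yG q.
Proof.
move=> Wq; have [u0|u_neq0] := eqVneq (uc q) 0.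
  set k := xcentre (xc q); have cu0 : cu k = 0 := xcentre_u0 _.
  exists (deg1 k), (fun w => upart (w.2 k)), (fun w => fx_quo k (xc w) * xpart (w.2 k)).
  split; [exact: mhpoly_upart | | exact: W_u0_upart | by move=> q'; apply: yG_fibre].
  apply: mhpoly0M (mhpoly_xpart k); apply: mhpoly_deg0 => //.
  by rewrite /fx_quo /xc /xpart; case: (val k) => [|[|?]] /=; polyfun_tac.
exists deg0, (fun w => uc w), (fun w => fx (xc w)).
split=> //; [exact: mhpoly_uc | | by move=> q' _ u'; rewrite /yG u'].
by apply: mhpoly_deg0 => //; rewrite /fx /xc /xpart /=; polyfun_tac.
Qed.

Lemma vG_regular q : W_ab al be q -> regular_at vG q.
Proof.
move=> Wq; have [x0|x_neq0] := eqVneq (xc q) 0.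
  set k := ucentre (uc q); have cx0 : cx k = 0 := ucentre_x0 _.
  exists (deg1 k), (fun w => xpart (w.2 k)), (fun w => fu_quo k (uc w) * upart (w.2 k)).
  split; [exact: mhpoly_xpart | | exact: W_x0_xpart | by move=> q'; apply: vG_fibre].
  apply: mhpoly0M (mhpoly_upart k); apply: mhpoly_deg0 => //.
  by rewrite /fu_quo /uc /upart; case: (val k) => [|[|[|[|?]]]] /=; polyfun_tac.
exists deg0, (fun w => xc w), (fun w => fu (uc w)).
split=> //; [exact: mhpoly_xc | | by move=> q' _ x'; rewrite /vG x'].
by apply: mhpoly_deg0 => //; rewrite /fu /uc /upart /=; polyfun_tac.
Qed.

Lemma G_scale lam w : (forall j, lam j <> 0) -> G (scale lam w) = G w.
Proof.
move=> lam_neq0; have lam_neq0' j : lam j != 0 by apply/eqP.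
rewrite /G /yG /vG /=.
have [-> ->] : xc (scale lam w) = xc w /\ uc (scale lam w) = uc w by [].
by rewrite !xpart_scale !upart_scale !mulf_div_scale.
Qed.

Lemma G_morphism : morphism (W_ab al be) (S_ab al be) G.
Proof.
split; [|split].
- by move=> q _ Wq; split; [case | exact: G_S].
- by move=> q _ _ _ [lam [lam_neq0 ->]]; rewrite G_scale //; apply: same_refl.
move=> q _ Wq.
have [dy [hy [ny [mhy mny hyq yE]]]] := yG_regular Wq.
have [dv [hv [nv [mhv mnv hvq vE]]]] := vG_regular Wq.
pose h w := hy w * hv w.
exists (degD dy dv), h,
  (fun j w => match val j with 0 => xc w * h w | 1 => ny w * hv w
                          | 2 => uc w * h w | _ => hy w * nv w end),
  (fun _ _ => 0%N), (fun _ _ => 0), (fun _ _ => 0).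
have mh : mhpoly (degD dy dv) h by apply: mhpolyM.
split; first exact: mh.
split; first by apply/eqP; rewrite mulf_neq0.
split.
  case=> [[|[|[|[|?]]]] ?] /=; try exact: mhpolyM.
  - exact: mhpoly0M mhpoly_xc mh.
  - exact: mhpoly0M mhpoly_uc mh.
split; first by case.
split; first by case.
move=> q' _ [bq' _] /eqP; rewrite mulf_eq0 negb_or => /andP[hyq' hvq'] _.
apply: same_det2; [|by case|by case|by case].
apply: funext => -[[|[|[|[|?]]]] ?] //=; rewrite ?yE ?vE // /h.
all: by field; rewrite hyq' hvq'.
Qed.

Lemma polyfun_fibre k b :
  polyfun (fun q => (of_xu (fibre k b q)).1) /\ polyfun (fun q => (of_xu (fibre k b q)).2).
Proof.
rewrite /fibre /centre_fibre /fx_quo /fu_quo; case: b; last case: (cu k == 0);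
  case: (val k) => [|[|[|[|?]]]] /=; split; polyfun_tac.
Qed.

Lemma F_morphism : morphism (S_ab al be) (W_ab al be) F.
Proof.
split; [|split].
- by move=> p _ hS; split; [apply: F_valid | apply: F_W].
- by move=> p q _ _ [lam [_ ->]]; apply: same_refl.
move=> p _ _.
pose a k q := (of_xu (fibre k (off_centre k p) q)).1.
pose b k q := (of_xu (fibre k (off_centre k p) q)).2.
exists (fun _ => 0%N), (fun _ => 1), (fun j q => (F q).1 j), (fun _ _ => 0%N), a, b.
split; first by apply: mhpoly_dim0; apply: pf_const.
split; first by apply/eqP; rewrite oner_eq0.
split; first by move=> j; apply: mhpoly_dim0; rewrite /F /mkpt /=; case: (val j == 0%N);
  polyfun_tac.
split; first by move=> k; have [? ?] := polyfun_fibre k (off_centre k p);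
  split; apply: mhpoly_dim0.
split; first by move=> k; apply: nz_pair_of_xu; apply: fibre_nz.
move=> q _ hS _ nz; apply: same_det2 => //; first by apply: funext => j /=; rewrite divr1.
  exact: F_valid.
move=> k.
change (det2 (of_xu (fibre k (off_centre k q) q)) (of_xu (fibre k (off_centre k p) q)) = 0).
by rewrite det2_of_xu2 fibre_det2 ?mulr0.
Qed.

Lemma yG_F p : S_ab al be p -> yG (F p) = p.1 1.
Proof.
move=> /[dup] hS /S_abE[yu _ _]; rewrite /yG xc_mkpt uc_mkpt.
have [u0|u_neq0] := eqVneq (p.1 2) 0; last by rewrite /= -yu mulfK.
set k := xcentre (p.1 0); have cu0 : cu k = 0 := xcentre_u0 _.
have x_c : p.1 0 = cx k by rewrite xcentre_root // -yu u0 mulr0.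
have quo_neq0 : fx_quo k (p.1 0) != 0 by rewrite x_c fx_quo_neq0.
rewrite F_at_centre ?u0 // /= xpart_of_xu upart_of_xu /centre_fibre cu0 eqxx /=.
by field; rewrite quo_neq0.
Qed.

Lemma centre_fibre_det2_x0 k p : S_ab al be p -> p.1 0 = 0 -> p.1 2 = cu k -> cx k = 0 ->
  (centre_fibre k p).1 * p.1 3 = fu_quo k (p.1 2) * (centre_fibre k p).2.
Proof.
move=> /S_abE[_ _ yv] x0 u_c cx0; rewrite /centre_fibre.
have [cu0|] := eqVneq (cu k) 0; last by rewrite mulrC.
have -> : k = @Ordinal 5 0 isT by apply: centre_inj; rewrite ?cx0 ?cu0.
by rewrite /= yv x0 u_c cu0 /fx_quo /fu_quo /=; ring.
Qed.

Lemma vG_F p : S_ab al be p -> vG (F p) = p.1 3.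
Proof.
move=> /[dup] hS /S_abE[_ xv _]; rewrite /vG xc_mkpt uc_mkpt.
have [x0|x_neq0] := eqVneq (p.1 0) 0; last by rewrite /= -xv mulrC mulKf.
set k := ucentre (p.1 2); have cx0 : cx k = 0 := ucentre_x0 _.
have u_c : p.1 2 = cu k by rewrite ucentre_root // -xv x0 mul0r.
have a1_neq0 : (centre_fibre k p).1 != 0 by rewrite centre_fibre1_neq0 ?x0.
rewrite F_at_centre ?x0 // /= xpart_of_xu upart_of_xu.
apply: (mulfI a1_neq0); rewrite (centre_fibre_det2_x0 hS) //.
by field; rewrite a1_neq0.
Qed.

Lemma FK p : S_ab al be p -> same (G (F p)) p.
Proof.
move=> hS; apply: same_det2; [|by case|by case|by case].
apply: ord4_ext => /=.
- exact: xc_mkpt.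
- exact: yG_F.
- exact: uc_mkpt.
- exact: vG_F.
Qed.

Lemma GK q : W_ab al be q -> same (F (G q)) q.
Proof.
move=> /[dup] Wq [bq _]; apply: same_det2; [exact: mkpt_c | exact: F_valid | |].
  by case/Bl_abE: bq.
move=> k /=; rewrite /fibre /off_centre /=.
case: ifP => [_|/norP[/negbNE/eqP x_c /negbNE/eqP u_c]]; first exact: Bl_det2.
apply: det2_of_xu_eq0; rewrite /centre_fibre.
have [cu0|cu_neq0] := eqVneq (cu k) 0; rewrite /=.
  have k_def : xcentre (xc q) = k by rewrite x_c xcentre_cx.
  have up_neq0 : upart (q.2 k) != 0 by rewrite -k_def W_u0_upart // u_c.
  by rewrite (yG_fibre cu0 bq up_neq0) divfK.
have cx0 := cu_neq0_cx cu_neq0.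
have k_def : ucentre (uc q) = k by rewrite u_c ucentre_cu.
have xp_neq0 : xpart (q.2 k) != 0 by rewrite -k_def W_x0_xpart // x_c.
by rewrite (vG_fibre cx0 bq xp_neq0) divfK.
Qed.

End Surface.

Theorem lemma3p5 (R : realType) (alpha beta : CC R) :
  alpha <> 0 -> alpha <> 1 -> beta <> 0 -> beta <> 1 ->
  exists F : pt R 4 0 -> pt R 2 5,
    isomorphism (S_ab alpha beta) (W_ab alpha beta) F /\
    (forall p, S_ab alpha beta p -> blowdown (F p) = nu_ab p).
Proof.
move=> /eqP a0 /eqP a1 /eqP b0 /eqP b1.
exists (F alpha beta); split=> [|p _]; last exact: F_blowdown.
split; first exact: F_morphism.
exists (G alpha beta); split.
- exact: G_morphism.
- by move=> p _; apply: FK.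
- by move=> q _; apply: GK.
Qed.
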